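(* For all positive integers $n$ and all nonnegative integers $d_1 \le d_2$, we have $\mathsf{maxR}(n,d_1) \le \mathsf{maxR}(n,d_2)$.
   Context: $\mathsf{WR}(f)$ is the Waring rank of a homogeneous $f\in\mathbb{C}[x_1,\dots,x_n]_d$: the smallest $r$ with $f=\sum_{k=1}^r\ell_k^d$ for linear forms $\ell_k$. $\mathsf{maxR}(n,d) = \max\{\mathsf{WR}(f) \mid f \in \mathbb{C}[x_1,\dots,x_n]_d\}$ is the maximum Waring rank of a degree-$d$ form in $n$ variables. *)

From Stdlib Require Import ClassicalEpsilon.
From Stdlib Require Rdefinitions.
From HB Require Import structures.
From mathcomp Require Import all_boot all_order all_algebra.
From mathcomp Require Import complex.
From mathcomp Require Import Rstruct.
From mathcomp Require Import mpoly.

Set Implicit Arguments.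
Unset Strict Implicit.
Unset Printing Implicit Defensive.

Import GRing.Theory Num.Theory.
Local Open Scope ring_scope.

Definition CC : Type := complex Rdefinitions.R.

Definition linear_form (n : nat) (l : {mpoly CC[n]}) : Prop := l \is 1.-homog.

(* f is a sum of r d-th powers of linear forms, with coefficients
   (coefficients are absorbed into the linear forms when d >= 1 over C;
   they matter only for the convention in degree 0). *)
Definition waring_decomp (n d : nat) (f : {mpoly CC[n]}) (r : nat) : Prop :=
  exists (c : 'I_r -> CC) (l : 'I_r -> {mpoly CC[n]}),
    (forall k, linear_form (l k)) /\ f = \sum_(k < r) c k *: (l k) ^+ d.

Definition asb (P : Prop) : bool :=
  if excluded_middle_informative P then true else false.

(* Waring rank: the least r admitting a decomposition (0 if none exists,
   which never happens for homogeneous f of degree d). *)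
Definition WR (n d : nat) (f : {mpoly CC[n]}) : nat :=
  match excluded_middle_informative
          (exists r, asb (@waring_decomp n d f r)) with
  | left H => ex_minn H
  | right _ => 0%N
  end.

(* maxR(n,d): the maximum of WR over forms of degree d in n variables,
   i.e. the least upper bound in nat (0 if unbounded, which never happens). *)
Definition maxR (n d : nat) : nat :=
  match excluded_middle_informative
          (exists m, asb (forall f : {mpoly CC[n]}, f \is d.-homog ->
                                     (@WR n d f <= m)%N)) with
  | left H => ex_minn H
  | right _ => 0%N
  end.

(* Products of powers of linear forms, hence monomials, hence all forms of
   degree d, are linear combinations of d-th powers of linear forms (by
   polarization: the binomial terms of (k + t l)^D are recovered from D + 1
   values of t).  So the Waring rank is bounded on forms of degree d and
   maxR(n,d) is a genuine maximum.  Differentiating a decomposition of F of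
   degree d+1 with respect to x_1 gives one of dF/dx_1 of the same length, and
   every form of degree d is dF/dx_1 for some form F of degree d+1; hence
   maxR(n,d) <= maxR(n,d+1). *)

From Stdlib Require Import ClassicalEpsilon.
From mathcomp Require Import all_boot all_order all_algebra complex Rstruct mpoly.

Set Implicit Arguments.
Unset Strict Implicit.
Unset Printing Implicit Defensive.

Import GRing.Theory Num.Theory.
Local Open Scope ring_scope.

Lemma msize_dhomog (R : nzRingType) n d (p : {mpoly R[n]}) :
  p \is d.-homog -> (msize p <= d.+1)%N.
Proof.
move=> hp; rewrite msizeE; apply/bigmax_leqP_seq => m mp _.
by rewrite (dhomog_mf hp mp).
Qed.

Lemma dhomog0_polyC (R : nzRingType) n (p : {mpoly R[n]}) :
  p \is 0.-homog -> p = (p@_0)%:MP.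
Proof. by move/msize_dhomog/msize1_polyC. Qed.

Lemma mderiv_dhomog (R : nzRingType) n d (i : 'I_n) (p : {mpoly R[n]}) :
  p \is d.+1.-homog -> p^`M(i) \is d.-homog.
Proof.
move=> hp; rewrite (mpolyE p) raddf_sum big_seq /=; apply: rpred_sum => m mp.
rewrite mderivZ mderivX; apply: rpredZ.
have [->|mi_neq0] := eqVneq (m i) 0%N; first by rewrite scale0r rpred0.
apply: rpredZ; rewrite dhomogX -(eqn_add2r 1) -(mdeg1 i) -mdegD submK ?lep1mP //.
by rewrite (dhomog_mf hp mp) mdeg1 addn1.
Qed.

Lemma mderiv_exp (R : comNzRingType) n (i : 'I_n) (p : {mpoly R[n]}) k :
  (p ^+ k.+1)^`M(i) = p^`M(i) * p ^+ k *+ k.+1.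
Proof.
elim: k => [|k IHk]; first by rewrite expr1 expr0 mulr1.
by rewrite exprS mderivM IHk mulrnAr mulrCA -exprS -mulrS.
Qed.

Lemma dhomog_antiderivative (F : numFieldType) n d (i : 'I_n)
    (f : {mpoly F[n]}) :
  f \is d.-homog -> exists2 G : {mpoly F[n]}, G \is d.+1.-homog & G^`M(i) = f.
Proof.
move=> hf.
exists (\sum_(m <- msupp f) (f@_m / (m i).+1%:R) *: 'X_[m + U_(i)]).
  rewrite big_seq; apply: rpred_sum => m mf; apply: rpredZ.
  rewrite dhomogX -addn1 -(mdeg1 i) -(dhomog_mf hf mf); exact/eqP/mdegD.
rewrite raddf_sum {3}(mpolyE f) /=; apply: eq_bigr => m _.
rewrite mderivZ mderivX mnmDE mnm1E eqxx addmK scalerA addn1 divfK //.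
by rewrite pnatr_eq0.
Qed.

Lemma lincomb_of_poly_values (F : fieldType) (V : lmodType F) N
    (x : 'I_N -> F) (w : 'I_N -> V) : injective x ->
    exists U : 'M[F]_N,
    forall i, w i = \sum_(j < N) U j i *: \sum_(k < N) x j ^+ k *: w k.
Proof.
move=> x_inj; pose A := Vandermonde N (\row_j x j).
have A_unit : A \in unitmx.
  rewrite unitmxE det_Vandermonde unitfE; apply/prodf_neq0 => j _.
  apply/prodf_neq0 => k jk; rewrite !mxE subr_eq0; apply/eqP => /x_inj kj.
  by rewrite kj ltnn in jk.
exists (invmx A) => i.
have delta (k : 'I_N) : \sum_(j < N) invmx A j i * x j ^+ k = (k == i)%:R.
  have := congr1 (fun M : 'M_N => M k i) (mulmxV A_unit); rewrite !mxE => <-.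
  by apply: eq_bigr => j _; rewrite !mxE mulrC.
under eq_bigr => j _ do
  [rewrite scaler_sumr; under eq_bigr => k _ do rewrite scalerA].
rewrite exchange_big /=; under eq_bigr => k _ do rewrite -scaler_suml delta.
rewrite (bigD1 i) //= eqxx scale1r big1 ?addr0 // => k /negbTE->.
by rewrite scale0r.
Qed.

Lemma big_split_ord_case (V : nmodType) r s (F : 'I_r -> V) (G : 'I_s -> V) :
  \sum_(i < r + s) match split i with inl j => F j | inr j => G j end =
  \sum_(i < r) F i + \sum_(i < s) G i.
Proof.
rewrite big_split_ord /=; congr (_ + _); apply: eq_bigr => i _.
  by rewrite (unsplitK (inl _ i)).
by rewrite (unsplitK (inr _ i)).
Qed.

Lemma asbP (P : Prop) : reflect P (asb P).
Proof. by rewrite /asb; case: excluded_middle_informative => p; constructor. Qed.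

Section WaringRank.

Variable n : nat.
Implicit Types (f g h : {mpoly CC[n]}) (a b d r s : nat).

Lemma waring_decomp0 d : waring_decomp d (0 : {mpoly CC[n]}) 0.
Proof. by exists (fun=> 0), (fun=> 0); split=> [[]//|]; rewrite big_ord0. Qed.

Lemma waring_decompD d g h r s :
  waring_decomp d g r -> waring_decomp d h s -> waring_decomp d (g + h) (r + s).
Proof.
move=> [c [l [linl ->]]] [e [k [link ->]]].
exists (fun i => match split i with inl j => c j | inr j => e j end).
exists (fun i => match split i with inl j => l j | inr j => k j end).
split=> [i|]; first by case: split.
by rewrite -big_split_ord_case; apply: eq_bigr => i _; case: split.
Qed.

Lemma waring_decompZ d c g r : waring_decomp d g r -> waring_decomp d (c *: g) r.
Proof.
move=> [e [l [linl ->]]]; exists (fun k => c * e k), l; split=> //.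
by rewrite scaler_sumr; apply: eq_bigr => k _; rewrite scalerA.
Qed.

Lemma waring_decomp_exp d (l : {mpoly CC[n]}) :
  linear_form l -> waring_decomp d (l ^+ d) 1.
Proof.
by move=> linl; exists (fun=> 1), (fun=> l); split=> //; rewrite big_ord1 scale1r.
Qed.

Lemma waring_decomp_mderiv d (i : 'I_n) f r :
  waring_decomp d.+1 f r -> waring_decomp d (f^`M(i)) r.
Proof.
case=> c [l [linl ->]].
exists (fun k => c k * ((l k)^`M(i)@_0 * d.+1%:R)), l; split=> //.
rewrite raddf_sum /=; apply: eq_bigr => k _.
rewrite mderivZ mderiv_exp {1}(dhomog0_polyC (mderiv_dhomog i (linl k))).
by rewrite mul_mpolyC scalerMnl scalerA mulr_natr.
Qed.

Definition waring_decomposable d f := exists r, waring_decomp d f r.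

Lemma waring_decomposable_sum d (I : Type) (t : seq I) (P : pred I)
    (F : I -> {mpoly CC[n]}) :
  (forall i, P i -> waring_decomposable d (F i)) ->
  waring_decomposable d (\sum_(i <- t | P i) F i).
Proof.
move=> decF; apply: big_ind => [|g h [r gr] [s hs]|//].
  by exists 0%N; apply: waring_decomp0.
by exists (r + s)%N; apply: waring_decompD.
Qed.

Lemma waring_decomposableZ d c f :
  waring_decomposable d f -> waring_decomposable d (c *: f).
Proof. by move=> [r fr]; exists r; apply: waring_decompZ. Qed.

Lemma waring_decomposable_exp d (l : {mpoly CC[n]}) :
  linear_form l -> waring_decomposable d (l ^+ d).
Proof. by exists 1%N; apply: waring_decomp_exp. Qed.

Lemma waring_decomposable_mul_exp a b (l k : {mpoly CC[n]}) :
  linear_form l -> linear_form k -> waring_decomposable (a + b) (l ^+ a * k ^+ b).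
Proof.
move=> linl link; set D := (a + b)%N.
pose w (i : 'I_D.+1) := k ^+ (D - i) * l ^+ i *+ 'C(D, i).
have nat_inj : injective (fun j : 'I_D.+1 => j%:R : CC).
  by move=> i j /eqP; rewrite eqr_nat => /eqP/val_inj.
have [U wE] := lincomb_of_poly_values w nat_inj.
have lt_a_D : (a < D.+1)%N by rewrite ltnS leq_addr.
have -> : l ^+ a * k ^+ b = ('C(D, a)%:R)^-1 *: w (Ordinal lt_a_D).
  rewrite /w /= -(scaler_nat 'C(D, a) (k ^+ (D - a) * l ^+ a)) scalerA.
  rewrite mulVf ?scale1r ?pnatr_eq0 -?lt0n ?bin_gt0 ?leq_addr //.
  by rewrite /D addKn mulrC.
apply/waring_decomposableZ; rewrite wE; apply: waring_decomposable_sum => j _.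
apply/waring_decomposableZ.
have <- : (k + j%:R *: l) ^+ D = \sum_(i < D.+1) (j%:R : CC) ^+ i *: w i.
  by rewrite exprDn; apply: eq_bigr => i _; rewrite exprZn -scalerAr scalerMnr.
by apply/waring_decomposable_exp/rpredD/rpredZ.
Qed.

Lemma waring_decomposableM a b g h :
  waring_decomposable a g -> waring_decomposable b h ->
  waring_decomposable (a + b) (g * h).
Proof.
move=> [r [c [l [linl ->]]]] [s [e [k [link ->]]]].
rewrite mulr_suml; apply: waring_decomposable_sum => i _.
rewrite mulr_sumr; apply: waring_decomposable_sum => j _.
rewrite -scalerAl -scalerAr scalerA.
exact/waring_decomposableZ/waring_decomposable_mul_exp.
Qed.

Lemma waring_decomposableX (m : 'X_{1..n}) :
  waring_decomposable (mdeg m) 'X_[m].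
Proof.
rewrite mpolyXE_id mdegE.
apply: (big_rec2 (fun a g => waring_decomposable a g)) => [|i a g _ dec_g].
  by rewrite -(expr0 (0 : {mpoly CC[n]})); apply/waring_decomposable_exp/dhomog0.
apply: waring_decomposableM dec_g; apply: waring_decomposable_exp.
by rewrite /linear_form dhomogX; apply/eqP/mdeg1.
Qed.

Lemma dhomog_waring_decomposable d f :
  f \is d.-homog -> waring_decomposable d f.
Proof.
move=> fd; rewrite (mpolyE f) big_seq; apply: waring_decomposable_sum => m mf.
apply: waring_decomposableZ; rewrite -(dhomog_mf fd mf).
exact: waring_decomposableX.
Qed.

Lemma WR_min d f r : waring_decomp d f r -> (WR d f <= r)%N.
Proof.
move=> fr; rewrite /WR; case: excluded_middle_informative => [ex|[]].
  by case: ex_minnP => m _; apply; apply/asbP.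
by exists r; apply/asbP.
Qed.

Lemma waring_decomp_WR d f :
  waring_decomposable d f -> waring_decomp d f (WR d f).
Proof.
move=> [r fr]; rewrite /WR; case: excluded_middle_informative => [ex|[]].
  by case: ex_minnP => m /asbP.
by exists r; apply/asbP.
Qed.

Lemma leq_WR_sum d (I : Type) (t : seq I) (P : pred I)
    (F : I -> {mpoly CC[n]}) :
  (forall i, P i -> waring_decomposable d (F i)) ->
  (WR d (\sum_(i <- t | P i) F i) <= \sum_(i <- t | P i) WR d (F i))%N.
Proof.
move=> decF; apply: WR_min; apply: (big_ind2 (waring_decomp d)) => [||i /decF].
- exact: waring_decomp0.
- by move=> g r h s; apply: waring_decompD.
- exact: waring_decomp_WR.
Qed.

Lemma leq_WRZ d c f : waring_decomposable d f -> (WR d (c *: f) <= WR d f)%N.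
Proof. by move/waring_decomp_WR/(waring_decompZ c)/WR_min. Qed.

Lemma WR_dhomog_bounded d f : f \is d.-homog ->
  (WR d f <= \sum_(m : 'X_{1..n < d.+1}) WR d 'X_[m])%N.
Proof.
move=> fd; rewrite {1}(mpolywE (msize_dhomog fd)).
have decX (m : 'X_{1..n}) : f@_m != 0 -> waring_decomposable d 'X_[m].
  by rewrite -mcoeff_msupp => /(dhomog_mf fd) <-; apply: waring_decomposableX.
apply: (leq_trans (leq_WR_sum _ _)) => [m _|].
  have [->|/decX] := eqVneq f@_m 0; last exact: waring_decomposableZ.
  by rewrite scale0r; exists 0%N; apply: waring_decomp0.
apply: leq_sum => m _; have [->|/decX] := eqVneq f@_m 0; last exact: leq_WRZ.
by rewrite scale0r (leq_trans (WR_min (waring_decomp0 d))).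
Qed.

Lemma maxR_min d M :
  (forall f, f \is d.-homog -> (WR d f <= M)%N) -> (maxR n d <= M)%N.
Proof.
move=> WR_le; rewrite /maxR; case: excluded_middle_informative => // ex.
by case: ex_minnP => m _; apply; apply/asbP.
Qed.

Lemma WR_le_maxR d f : f \is d.-homog -> (WR d f <= maxR n d)%N.
Proof.
rewrite /maxR; case: excluded_middle_informative => [ex|[]].
  by case: ex_minnP => m /asbP WR_le _; apply: WR_le.
exists (\sum_(m : 'X_{1..n < d.+1}) WR d 'X_[m])%N.
by apply/asbP => g; apply: WR_dhomog_bounded.
Qed.

Lemma maxR_leS d : (0 < n)%N -> (maxR n d <= maxR n d.+1)%N.
Proof.
move=> n_gt0; apply: maxR_min => f fd.
have [F Fd <-] := dhomog_antiderivative (Ordinal n_gt0) fd.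
apply: leq_trans (WR_le_maxR Fd).
exact/WR_min/waring_decomp_mderiv/waring_decomp_WR/dhomog_waring_decomposable.
Qed.

End WaringRank.

Theorem proposition12 (n d1 d2 : nat) :
  (0 < n)%N -> (d1 <= d2)%N -> (maxR n d1 <= maxR n d2)%N.
Proof.
move=> n_gt0; apply: (@homo_leq _ (maxR n) leq leqnn leq_trans).
by move=> d; apply: maxR_leS.
Qed.
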